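(* For $n>4$, the 1-skeleton of the network space $\mathfrak S_n$ is the complete graph on $\delta=2^{n-1}-n-1$ vertices.
   Context: $X$ is a set of $n$ labels. A split of $X$ is an unordered partition of $X$ into two nonempty sets; it is trivial if one part is a singleton. A circular ordering of $X$ is a cyclic arrangement $\pi=(x_1,\dots,x_n)$ up to rotation and reflection; a split is circular w.r.t. $\pi$ if it has the form $\{\{x_{i+1},\dots,x_j\},X\setminus\{x_{i+1},\dots,x_j\}\}$ (indices mod $n$). Give $\mathbb R^\delta$ coordinates indexed by the nontrivial splits. For each circular ordering $\pi$, $O_\pi$ is the set of nonnegative vectors supported on splits circular w.r.t. $\pi$, and the chamber $\Delta_\pi=O_\pi\cap\{\sum_s x_s=1\}$. The network space is $\mathfrak S_n=\bigcup_\pi\Delta_\pi$, a simplicial complex whose simplices are the faces of the chambers; its vertices are the unit vectors of nontrivial splits. *)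

From HB Require Import structures.
From mathcomp Require Import all_boot all_order all_fingroup.
Set Implicit Arguments. Unset Strict Implicit. Unset Printing Implicit Defensive.

(* Labels X = 'I_n.  A split is an unordered partition {A, X\A}, represented
   as the two-element set of sets [set A; ~: A]. *)
Definition split_of (n : nat) (A : {set 'I_n}) : {set {set 'I_n}} := [set A; ~: A].

Definition nt_splits (n : nat) : {set {set {set 'I_n}}} :=
  [set split_of A | A in [set A : {set 'I_n} | (2 <= #|A|) && (2 <= #|~: A|)]].

(* A circular ordering is given by a bijection pi : 'I_n -> 'I_n,
   x_i := pi i.  The cyclic interval {x_i, x_(i+1), ..., x_(i+k-1)} (indices
   mod n). *)
Definition cyc_interval (n : nat) (pi : {perm 'I_n}) (i : 'I_n) (k : nat)
  : {set 'I_n} :=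
  [set pi j | j in [set j : 'I_n | (j + n - i) %% n < k]].

Definition circular (n : nat) (pi : {perm 'I_n}) (S : {set {set 'I_n}}) : Prop :=
  exists (i : 'I_n) (k : nat), cyc_interval pi i k \in S.

(* Simplices of the network space: sets of nontrivial splits all circular
   w.r.t. one common circular ordering (faces of a chamber Delta_pi). *)
Definition simplex (n : nat) (F : {set {set {set 'I_n}}}) : Prop :=
  F \subset nt_splits n /\
  exists pi : {perm 'I_n}, forall S, S \in F -> circular pi S.

Definition edge (n : nat) (S T : {set {set 'I_n}}) : Prop :=
  S != T /\ simplex [set S; T].

From HB Require Import structures.
From mathcomp Require Import all_boot all_order all_fingroup zify.
Set Implicit Arguments. Unset Strict Implicit.

(* The 2^n - 2n - 2 subsets A with both A and ~A of size at least 2 are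
   paired off by complementation, each pair giving one nontrivial split.
   For adjacency, list the labels block by block as A∩B, A∩~B, ~A∩~B, ~A∩B:
   in this circular ordering both A and ~B are contiguous, so the splits
   {A, ~A} and {B, ~B} lie in a common chamber. *)

Definition nt_sides (n : nat) : {set {set 'I_n}} :=
  [set A : {set 'I_n} | (2 <= #|A|) && (2 <= #|~: A|)].

Lemma card_nt_sides n : 2 < n -> #|nt_sides n| = 2 ^ n - 2 * n - 2.
Proof.
move=> n_gt2.
have card_setE (p : pred {set 'I_n}) : #|[set A | p A]| = \sum_A (p A : nat).
  by rewrite -sum1_card big_mkcond; apply: eq_bigr => A _; rewrite inE; case: (p A).
have card_fixed k : #|[set A : {set 'I_n} | #|A| == k]| = 'C(n, k).
  by rewrite card_draws card_ord.
have sides_classes : 2 ^ n = #|nt_sides n|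
    + #|[set A : {set 'I_n} | #|A| == 0]| + #|[set A : {set 'I_n} | #|A| == 1]|
    + #|[set A : {set 'I_n} | #|A| == n - 1]| + #|[set A : {set 'I_n} | #|A| == n]|.
  rewrite /nt_sides !card_setE.
  rewrite -[in LHS](card_ord n) -cardsT -card_powerset powersetT cardsT -sum1_card.
  rewrite -!big_split /=; apply: eq_bigr => A _.
  have := cardsC A; rewrite card_ord.
  move: #|A| #|~: A| => a b; lia.
rewrite sides_classes !card_fixed bin0 bin1 binn bin_sub ?bin1; lia.
Qed.

Lemma split_ofC n (A : {set 'I_n}) : split_of (~: A) = split_of A.
Proof. by rewrite /split_of setCK setUC. Qed.

Lemma split_of_mem n (A X : {set 'I_n}) : X \in split_of A -> split_of X = split_of A.
Proof. by rewrite !inE => /orP[]/eqP->; rewrite ?split_ofC. Qed.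

Lemma card_split_of n (A : {set 'I_n}) : 0 < n -> #|split_of A| = 2.
Proof.
move=> n_gt0; rewrite cards2; suff -> : A != ~: A by [].
apply/eqP => A_eqC.
have x0 : 'I_n := Ordinal n_gt0.
by have := in_setC x0 A; rewrite -A_eqC; case: (x0 \in A).
Qed.

Lemma nt_splits_partition n : partition (nt_splits n) (nt_sides n).
Proof.
have sidesC A : A \in nt_sides n -> ~: A \in nt_sides n by rewrite !inE setCK andbC.
apply/and3P; split.
- apply/eqP/setP => X; apply/bigcupP/idP => [[_ /imsetP[A A_nt ->]]|X_nt].
    by case/set2P => ->; [|apply: sidesC].
  by exists (split_of X); [apply: imset_f | rewrite !inE eqxx].
- apply/trivIsetP => _ _ /imsetP[A _ ->] /imsetP[B _ ->] AB_neq.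
  apply/pred0P => X /=; apply/negbTE/andP => -[XA XB]; move/eqP: AB_neq; apply.
  by rewrite -(split_of_mem XA) -(split_of_mem XB).
- by apply/imsetP => -[A _ /setP/(_ A)]; rewrite !inE eqxx.
Qed.

Lemma card_nt_splits n : 2 < n -> #|nt_splits n| = 2 ^ n.-1 - n - 1.
Proof.
move=> n_gt2.
have uniform : {in nt_splits n, forall S : {set {set 'I_n}}, #|S| = 2}.
  by move=> _ /imsetP[A _ ->]; apply: card_split_of; lia.
have := card_uniform_partition uniform (nt_splits_partition n).
have : 2 ^ n = 2 * 2 ^ n.-1 by rewrite -expnS prednK //; lia.
rewrite card_nt_sides //; lia.
Qed.

Section SeqPerm.

Variables (n : nat) (s : seq 'I_n).
Hypotheses (s_uniq : uniq s) (mem_s : forall x, x \in s).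

Lemma size_full_seq : size s = n.
Proof.
rewrite -[RHS](size_enum_ord n); apply/perm_size/uniq_perm => // [|x].
  exact: enum_uniq.
by rewrite mem_s mem_enum.
Qed.

Lemma nth_self_inj : injective (fun j : 'I_n => nth j s j).
Proof.
move=> j1 j2 /= nth_eq.
have [j1_lt j2_lt] : j1 < size s /\ j2 < size s by rewrite size_full_seq.
rewrite (set_nth_default j1 j2 j2_lt) in nth_eq.
by apply/val_inj/eqP; rewrite -(nth_uniq j1 j1_lt j2_lt s_uniq) nth_eq.
Qed.

Definition seq_perm : {perm 'I_n} := perm nth_self_inj.

Lemma mem_cyc_interval_seq_perm (i : 'I_n) k x :
  i + k <= n -> (x \in cyc_interval seq_perm i k) = (i <= index x s < i + k).
Proof.
move=> ik_le_n.
have shift_mod (j : 'I_n) : (j + n - i) %% n = if i <= j then j - i else j + n - i.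
  have := ltn_ord j; have := ltn_ord i; case: ifP => ij i_lt j_lt.
    by rewrite -addnBAC // modnDr modn_small //; lia.
  by rewrite modn_small //; lia.
apply/imsetP/idP => [[j] | x_range].
  rewrite inE shift_mod => j_range ->; rewrite permE index_uniq ?size_full_seq //.
  by move: j_range; case: ifP; lia.
have x_lt : index x s < n by rewrite -[X in _ < X]size_full_seq index_mem.
exists (Ordinal x_lt); last by rewrite permE /= nth_index.
by rewrite inE shift_mod /=; case: ifP; lia.
Qed.

End SeqPerm.

Lemma circular_split_of n (pi : {perm 'I_n}) i k (A : {set 'I_n}) :
  cyc_interval pi i k = A -> circular pi (split_of A).
Proof. by move=> <-; exists i, k; rewrite !inE eqxx. Qed.

Lemma mem_cat_middle (T : eqType) (s1 s2 s3 : seq T) x :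
  uniq (s1 ++ s2 ++ s3) ->
  (x \in s2) = (size s1 <= index x (s1 ++ s2 ++ s3) < size s1 + size s2).
Proof.
rewrite cat_uniq has_cat negb_or => /and3P[_ /andP[disj _] _].
rewrite !index_cat; have [x1 | x1] := boolP (x \in s1).
  have x2F : x \in s2 = false by apply/negP => /(hasPn disj); rewrite /= x1.
  by rewrite x2F leqNgt; move: x1; rewrite -index_mem => ->.
rewrite leq_addr ltn_add2l -index_mem; case: ifP => // x2.
by rewrite ltnNge leq_addr.
Qed.

Lemma circular_split_pair n (A B : {set 'I_n}) :
  0 < #|~: B| -> exists pi, circular pi (split_of A) /\ circular pi (split_of B).
Proof.
move=> coB_gt0.
set e1 := enum (A :&: B); set e2 := enum (A :&: ~: B).
set e3 := enum (~: A :&: ~: B); set e4 := enum (~: A :&: B).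
set s := e1 ++ e2 ++ e3 ++ e4.
have mem_s x : x \in s.
  by rewrite !mem_cat !mem_enum !inE; case: (x \in A); case: (x \in B).
have size_s : size s = n.
  rewrite !size_cat -!cardE.
  have := cardsID B A; have := cardsID B (~: A); have := cardsC A.
  by rewrite !setDE card_ord; lia.
have s_uniq : uniq s.
  apply: (leq_size_uniq (enum_uniq 'I_n)) => [x _|]; first exact: mem_s.
  by rewrite size_s size_enum_ord.
have size_e23 : size e2 + size e3 = #|~: B|.
  by rewrite -!cardE -(cardsID A (~: B)) setDE !(setIC (~: B)).
have A_intervalE x : (x \in A) = (x \in e1 ++ e2).
  by rewrite !mem_cat !mem_enum !inE; case: (x \in A); case: (x \in B).
have coB_intervalE x : (x \in ~: B) = (x \in e2 ++ e3).
  by rewrite !mem_cat !mem_enum !inE; case: (x \in A); case: (x \in B).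
have s_A : s = [::] ++ (e1 ++ e2) ++ (e3 ++ e4) by rewrite /= -catA.
have s_coB : s = e1 ++ (e2 ++ e3) ++ e4 by rewrite /s -!catA.
exists (seq_perm s_uniq mem_s); split.
- have n_gt0 : 0 < n by rewrite -size_s /s !size_cat; lia.
  apply: (@circular_split_of _ _ (Ordinal n_gt0) (size (e1 ++ e2))).
  apply/setP => x; rewrite mem_cyc_interval_seq_perm /=; last first.
    by rewrite -[X in _ <= X]size_s s_A !size_cat /=; lia.
  by rewrite A_intervalE (@mem_cat_middle _ [::] _ (e3 ++ e4)) -s_A.
- have e1_lt : size e1 < n by rewrite -[X in _ < X]size_s /s !size_cat; lia.
  rewrite -split_ofC; apply: (@circular_split_of _ _ (Ordinal e1_lt) (size (e2 ++ e3))).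
  apply/setP => x; rewrite mem_cyc_interval_seq_perm /=; last first.
    by rewrite -[X in _ <= X]size_s s_coB !size_cat /=; lia.
  by rewrite coB_intervalE (@mem_cat_middle _ e1 _ e4) -s_coB.
Qed.

Theorem corollary8 (n : nat) (hn : 4 < n) :
  #|nt_splits n| = 2 ^ n.-1 - n - 1 /\
  (forall S T : {set {set 'I_n}},
      S \in nt_splits n -> T \in nt_splits n -> S != T -> edge S T).
Proof.
split; first by apply: card_nt_splits; lia.
move=> S T S_nt T_nt ST_neq; split=> //; split.
  by apply/subsetP => X /set2P[]->.
case/imsetP: S_nt => A _ ->; case/imsetP: T_nt => B; rewrite inE => /andP[_ coB_ge2] ->.
have [pi [A_circ B_circ]] := circular_split_pair A (ltnW coB_ge2).
by exists pi => X /set2P[]->.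
Qed.
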